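(* Let $(X,d)$ be a metric space, $\lambda\ge 0$, and $\ell:X\to[0,+\infty)$ a lower semicontinuous function with $\inf_X\ell=0$. Suppose $u$ is a supersolution of $(\mathcal{G}_\lambda)$. Then the function $T^\infty u$ is a solution of $(\mathcal{G}_\lambda)$.
   Context: Global slope: for $u:X\to\mathbb{R}\cup\{+\infty\}$, $G[u](x)=\sup_{y\neq x}\frac{(u(x)-u(y))_+}{d(x,y)}$ if $u(x)<+\infty$, and $G[u](x)=+\infty$ otherwise ($\alpha_+=\max\{\alpha,0\}$). Equation $(\mathcal{G}_\lambda)$: $\lambda u(x)+G[u](x)=\ell(x)$ for all $x\in X$, with $\inf_X u=0$. A subsolution is a function $u:X\to\mathbb{R}\cup\{+\infty\}$ with $\inf_X u=0$ and $\lambda u+G[u]\le\ell$ on $X$; a supersolution is a lower semicontinuous $v:X\to\mathbb{R}\cup\{+\infty\}$ with $\inf_X v=0$ and $\lambda v+G[v]\ge \ell$ on $X$; a solution is a lower semicontinuous function that is both a sub- and a supersolution. For $u:X\to[0,+\infty]$, define $Tu(x)=\inf_{y\in X}\frac{u(y)+\ell(x)d(x,y)}{1+\lambda d(x,y)}$; then $u\ge Tu\ge T^2u\ge\cdots\ge 0$, and $T^\infty u(x):=\lim_{n\to\infty}T^nu(x)$. *)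

From mathcomp Require Import all_boot all_order all_algebra.
From mathcomp Require Import all_classical all_reals all_analysis.
Set Implicit Arguments. Unset Strict Implicit. Unset Printing Implicit Defensive.
Import Order.TTheory GRing.Theory Num.Theory.
Local Open Scope classical_set_scope.
Local Open Scope ring_scope.
Local Open Scope ereal_scope.

Definition is_metric (R : realType) (X : Type) (d : X -> X -> R) : Prop :=
  [/\ (forall x y, (0 <= d x y)%R),
      (forall x y, d x y = 0%R <-> x = y),
      (forall x y, d x y = d y x) &
      (forall x y z, (d x z <= d x y + d y z)%R)].

Definition lsc_d (R : realType) (X : Type) (d : X -> X -> R) (f : X -> \bar R) : Prop :=
  forall (x : X) (c : R), c%:E < f x ->
    exists2 delta : R, (0 < delta)%R & forall y, (d x y < delta)%R -> c%:E < f y.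

Definition einf_X (R : realType) (X : Type) (f : X -> \bar R) : \bar R :=
  ereal_inf (range f).

(* global slope G[u](x); the sup over y <> x of nonnegative quantities is
   taken with value 0 on the empty family (hence the maxe with 0) *)
Definition gslope (R : realType) (X : Type) (d : X -> X -> R) (u : X -> \bar R) (x : X)
  : \bar R :=
  if u x < +oo then
    maxe 0 (ereal_sup [set maxe (u x - u y) 0 * ((d x y)^-1)%:E | y in [set y | y <> x]])
  else +oo.

Definition subsolution (R : realType) (X : Type) (d : X -> X -> R) (lam : R)
  (l : X -> R) (u : X -> \bar R) : Prop :=
  einf_X u = 0 /\ forall x, lam%:E * u x + gslope d u x <= (l x)%:E.

Definition supersolution (R : realType) (X : Type) (d : X -> X -> R) (lam : R)
  (l : X -> R) (u : X -> \bar R) : Prop :=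
  [/\ lsc_d d u, einf_X u = 0 & forall x, (l x)%:E <= lam%:E * u x + gslope d u x].

Definition solution (R : realType) (X : Type) (d : X -> X -> R) (lam : R)
  (l : X -> R) (u : X -> \bar R) : Prop :=
  lsc_d d u /\ subsolution d lam l u /\ supersolution d lam l u.

Definition Top (R : realType) (X : Type) (d : X -> X -> R) (lam : R)
  (l : X -> R) (u : X -> \bar R) : X -> \bar R :=
  fun x => ereal_inf [set (u y + (l x * d x y)%:E) * ((1 + lam * d x y)^-1)%:E | y in setT].

Definition Tinf (R : realType) (X : Type) (d : X -> X -> R) (lam : R)
  (l : X -> R) (u : X -> \bar R) : X -> \bar R :=
  fun x => limn (fun n : nat => iter n (Top d lam l) u x).

From mathcomp Require Import all_boot all_order all_algebra.
From mathcomp Require Import all_classical all_reals all_analysis.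
From mathcomp Require Import lra.
Set Implicit Arguments. Unset Strict Implicit. Unset Printing Implicit Defensive.
Import Order.TTheory GRing.Theory Num.Theory.
Local Open Scope ring_scope.
Local Open Scope ereal_scope.

(* Since T w <= w, T^oo u is the infimum v of the T^n u, and letting n go to
   infinity in v <= T (T^n u) gives v <= T v, i.e.
   v x (1 + lam d(x,y)) <= v y + l x d(x,y) for all x, y.  Such a v is lower
   semicontinuous, satisfies lam v <= l as soon as inf v = 0, and has global
   slope at most l - lam v: it is a subsolution.  Moreover v is the largest
   w <= u with w <= T w.  Where v x = u x, G[v] x >= G[u] x.  Where v x < u x
   and G[v] x < l x - lam v x, the maximum of v and a small cone
   v x + h - b d(x, .) would be a larger such function below u, by lower
   semicontinuity of u and l. *)

Lemma einf_X_squeeze (R : realType) (X : Type) (f g : X -> \bar R) :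
  (forall x, 0 <= f x) -> (forall x, f x <= g x) -> einf_X g = 0 -> einf_X f = 0.
Proof.
move=> f0 fg g0; apply: le_anti; apply/andP; split.
  rewrite -g0; apply: le_ereal_inf_tmp => _ [x _ <-].
  by apply: ge_ereal_inf; exists (f x); [exists x | exact: fg].
by apply: le_ereal_inf_tmp => _ [x _ <-].
Qed.

Lemma lte_fin_gap (R : realFieldType) (r : R) (e : \bar R) :
  r%:E < e -> exists2 eta : R, (0 < eta)%R & (r + eta)%:E < e.
Proof.
case: e => [s||] //= rs; last by exists 1%R; rewrite ?ltry.
rewrite lte_fin in rs.
by exists ((s - r) / 2)%R; [rewrite divr_gt0 ?subr_gt0 | rewrite lte_fin; lra].
Qed.

Lemma exists_pos_below (R : realFieldType) (a k : R) : (0 < a)%R -> (0 <= k)%R ->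
  exists2 h : R, (0 < h <= a)%R & (k * h <= a)%R.
Proof.
move=> a_gt0 k_ge0; have k1_gt0 : (0 < 1 + k)%R by rewrite ltr_pwDl.
exists (a / (1 + k))%R.
  by rewrite divr_gt0 //= ler_pdivrMr // mulrDr mulr1 lerDl mulr_ge0 // ltW.
by rewrite mulrA ler_pdivrMr // mulrDr mulr1 mulrC lerDr ltW.
Qed.

Section GlobalSlope.
Variables (R : realType) (X : Type) (d : X -> X -> R).
Hypothesis d_metric : is_metric d.

Lemma metric_ge0 x y : (0 <= d x y)%R.
Proof. by case: d_metric. Qed.

Lemma metric_xx x : d x x = 0%R.
Proof. by case: d_metric => _ d0 _ _; apply/d0. Qed.

Lemma metric_gt0 x y : y <> x -> (0 < d x y)%R.
Proof.
case: d_metric => _ d0 _ _ yx; rewrite lt_def metric_ge0 andbT.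
by apply/eqP => /d0 xy; apply: yx.
Qed.

Lemma gslope_ge0 (f : X -> \bar R) x : 0 <= gslope d f x.
Proof. by rewrite /gslope; case: ifP; rewrite ?le_max ?lexx. Qed.

Lemma le_gslope (f g : X -> \bar R) x :
  (forall y, g y <= f y) -> f x = g x -> gslope d f x <= gslope d g x.
Proof.
move=> gf fg; rewrite /gslope fg; case: ifP => // _.
apply: le_max2 => //; apply: ge_ereal_sup => _ [y yx <-].
apply: le_ereal_sup_tmp; exists (maxe (g x - g y) 0 * ((d x y)^-1)%:E).
  by exists y.
apply: lee_wpmul2r; first by rewrite lee_fin invr_ge0 metric_ge0.
by apply: le_max2 => //; apply: leeB.
Qed.

Lemma gslope_le (w : X -> R) a x : (0 <= a)%R ->
  (forall y, w x - w y <= a * d x y)%R -> gslope d (EFin \o w) x <= a%:E.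
Proof.
move=> a0 wa; rewrite /gslope /= ltry ge_max lee_fin a0 /=.
apply: ge_ereal_sup => _ [y yx <-].
rewrite -EFinB -EFin_max -EFinM lee_fin ler_pdivrMr ?metric_gt0 //.
by rewrite ge_max wa mulr_ge0 ?metric_ge0.
Qed.

Lemma gslope_ge (w : X -> R) a x :
  (forall b, (0 < b < a)%R -> exists2 y, y <> x & (b * d x y <= w x - w y)%R) ->
  a%:E <= gslope d (EFin \o w) x.
Proof.
move=> steep; have [a_le0|a_gt0] := leP a 0%R.
  by apply: le_trans (gslope_ge0 _ _); rewrite lee_fin.
rewrite /gslope /= ltry le_max; apply/orP; right.
apply/lee_mul01Pr => [|r /andP[r_gt0 r_lt1]]; first by rewrite lee_fin ltW.
have [|y yx ry] := steep (r * a)%R; first by rewrite mulr_gt0 //= gtr_pMl.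
apply: le_ereal_sup_tmp; exists (maxe ((w x)%:E - (w y)%:E) 0 * ((d x y)^-1)%:E).
  by exists y.
rewrite -EFinB -EFin_max -!EFinM lee_fin ler_pdivlMr ?metric_gt0 //.
by rewrite le_max ry.
Qed.

End GlobalSlope.

Section OperatorT.
Variables (R : realType) (X : Type) (d : X -> X -> R) (lam : R) (l : X -> R).
Hypotheses (d_metric : is_metric d) (lam_ge0 : (0 <= lam)%R)
  (l_ge0 : forall x, (0 <= l x)%R).

Local Notation T := (Top d lam l).

(* [w <= T w] with the positive denominators cleared. *)
Definition Tsubfixed_at (w : X -> R) p :=
  forall q, (w p * (1 + lam * d p q) <= w q + l p * d p q)%R.

Definition Tsubfixed (w : X -> R) := forall p, Tsubfixed_at w p.

Lemma Tdenom_gt0 x y : (0 < 1 + lam * d x y)%R.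
Proof. by rewrite ltr_pwDl // mulr_ge0 ?metric_ge0. Qed.

Lemma Top_ub f x y :
  T f x <= (f y + (l x * d x y)%:E) * ((1 + lam * d x y)^-1)%:E.
Proof. by apply: ereal_inf_lbound; exists y. Qed.

Lemma Top_le f x : T f x <= f x.
Proof.
by apply: le_trans (Top_ub f x x) _; rewrite metric_xx // !mulr0 !addr0 invr1 mule1.
Qed.

Lemma Top_ge0 f x : (forall y, 0 <= f y) -> 0 <= T f x.
Proof.
move=> f0; apply: le_ereal_inf_tmp => _ [y _ <-].
rewrite mule_ge0 ?adde_ge0 // lee_fin ?mulr_ge0 ?metric_ge0 //.
by rewrite invr_ge0 ltW ?Tdenom_gt0.
Qed.

Lemma Tsubfixed_le_Top (w : X -> R) f x :
  Tsubfixed w -> (forall p, (w p)%:E <= f p) -> (w x)%:E <= T f x.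
Proof.
move=> w_sub wf; apply: le_ereal_inf_tmp => _ [y _ <-].
rewrite lee_pdivlMr ?Tdenom_gt0 // -EFinM.
by apply: le_trans (leeD (wf y) (lexx _)); rewrite -EFinD lee_fin; apply: w_sub.
Qed.

Lemma Tinf_inf f x : Tinf d lam l f x = ereal_inf (range (fun n => iter n T f x)).
Proof.
apply: cvg_lim => //; apply: ereal_nonincreasing_cvgn.
by apply/nonincreasing_seqP => n; rewrite iterS Top_le.
Qed.

Lemma Tinf_le_iter f n x : Tinf d lam l f x <= iter n T f x.
Proof. by rewrite Tinf_inf; apply: ereal_inf_lbound; exists n. Qed.

Lemma Tinf_ge0 f x : (forall y, 0 <= f y) -> 0 <= Tinf d lam l f x.
Proof.
move=> f0; rewrite Tinf_inf; apply: le_ereal_inf_tmp => _ [n _ <-].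
by elim: n x => [|n IH] x //=; apply: Top_ge0.
Qed.

Lemma Tinf_fin_num f x : (forall p, 0 <= f p) -> (exists y, f y < +oo) ->
  Tinf d lam l f x \is a fin_num.
Proof.
move=> f0 [y fy]; rewrite ge0_fin_numE ?Tinf_ge0 //.
apply: le_lt_trans (Tinf_le_iter f 1 x) _; apply: le_lt_trans (Top_ub f x y) _.
have fy_fin : f y \is a fin_num by rewrite ge0_fin_numE.
by rewrite -(fineK fy_fin) -EFinD -EFinM ltry.
Qed.

Lemma Tsubfixed_le_Tinf (w : X -> R) f x :
  Tsubfixed w -> (forall p, (w p)%:E <= f p) -> (w x)%:E <= Tinf d lam l f x.
Proof.
move=> w_sub wf; rewrite Tinf_inf; apply: le_ereal_inf_tmp => _ [n _ <-].
by elim: n x => [|n IH] x //=; apply: Tsubfixed_le_Top.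
Qed.

Lemma Tinf_Tsubfixed f : (forall x, Tinf d lam l f x \is a fin_num) ->
  Tsubfixed (fine \o Tinf d lam l f).
Proof.
move=> v_fin p q; rewrite -lerBlDr -lee_fin /= fineK // (Tinf_inf f q).
apply: le_ereal_inf_tmp => _ [n _ <-].
rewrite EFinB leeBlDr // EFinM fineK // -lee_pdivlMr ?Tdenom_gt0 //.
by apply: le_trans (Tinf_le_iter f n.+1 p) _; rewrite iterS Top_ub.
Qed.

Lemma Tsubfixed_lsc (w : X -> R) : (forall x, (0 <= w x)%R) -> Tsubfixed w ->
  lsc_d d (EFin \o w).
Proof.
move=> w0 w_sub x c; rewrite /= lte_fin => cx.
have lx1 : (0 < l x + 1)%R by rewrite ltr_pwDr.
exists ((w x - c) / (l x + 1))%R; first by rewrite divr_gt0 // subr_gt0.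
move=> y; rewrite ltr_pdivlMr // lte_fin => dxy.
have dxy0 := metric_ge0 d_metric x y.
have := w_sub x y; have := mulr_ge0 (w0 x) (mulr_ge0 lam_ge0 dxy0); lra.
Qed.

Lemma Tsubfixed_lam_le (w : X -> R) x : Tsubfixed w -> einf_X (EFin \o w) = 0 ->
  (lam * w x <= l x)%R.
Proof.
move=> w_sub w_inf; have [wx_le0|wx_gt0] := leP (w x) 0%R.
  by apply: le_trans (l_ge0 x); rewrite mulr_ge0_le0.
have /ereal_inf_lt[_ [y _ <-]] : ereal_inf (range (EFin \o w)) < (w x)%:E.
  by rewrite -/(einf_X _) w_inf lte_fin.
rewrite lte_fin => wyx; have yx : y <> x by move=> yx; rewrite yx ltxx in wyx.
rewrite -(ler_pM2r (metric_gt0 d_metric yx)).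
have := w_sub x y; lra.
Qed.

Lemma Tsubfixed_subsolution (w : X -> R) : Tsubfixed w -> einf_X (EFin \o w) = 0 ->
  subsolution d lam l (EFin \o w).
Proof.
move=> w_sub w_inf; split=> // x.
have lam_le := Tsubfixed_lam_le x w_sub w_inf.
have slope_le : gslope d (EFin \o w) x <= (l x - lam * w x)%:E.
  by apply: gslope_le => [//||y]; [rewrite subr_ge0 | have := w_sub x y; lra].
rewrite /= -EFinM; apply: le_trans (leeD2l _ slope_le) _.
by rewrite -EFinD lee_fin; lra.
Qed.

Lemma Tsubfixed_at_max (w1 w2 : X -> R) p : Tsubfixed_at w1 p -> (w2 p <= w1 p)%R ->
  Tsubfixed_at (fun q => Num.max (w1 q) (w2 q)) p.
Proof.
move=> w1_sub w21 q; rewrite max_l //; apply: le_trans (w1_sub q) _.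
by rewrite lerD2r le_max lexx.
Qed.

Lemma cone_Tsubfixed_at x (al be : R) p : (0 <= be)%R ->
  (lam * (al - be * d x p) + be <= l p)%R ->
  Tsubfixed_at (fun q => al - be * d x q)%R p.
Proof.
move=> be0 slope q; case: d_metric => dpq0 _ _ tri.
have slack : (0 <= (l p - lam * (al - be * d x p) - be) * d p q)%R.
  by apply: mulr_ge0 => //; lra.
have := ler_wpM2l be0 (tri x p q); lra.
Qed.

Section MaximalTsubfixed.
Variables (u : X -> \bar R) (w : X -> R).
Hypotheses (l_lsc : lsc_d d (fun x => (l x)%:E)) (u_lsc : lsc_d d u)
  (w_le_u : forall p, (w p)%:E <= u p) (w_sub : Tsubfixed w)
  (w_max : forall w' : X -> R, Tsubfixed w' -> (forall p, (w' p)%:E <= u p) ->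
     forall p, (w' p <= w p)%R).

Lemma maximal_no_cone x (al be : R) : (w x < al)%R -> (0 <= be)%R ->
  ~ (forall p, (w p < al - be * d x p)%R ->
       (al - be * d x p)%:E <= u p /\ (lam * (al - be * d x p) + be <= l p)%R).
Proof.
move=> wx_lt be0 cone_ok.
pose c q := (al - be * d x q)%R.
pose W q := Num.max (w q) (c q).
have W_le_u p : (W p)%:E <= u p.
  rewrite /W /=; have [cw|wc] := leP (c p) (w p) => //.
  by case: (cone_ok p wc).
have W_sub : Tsubfixed W.
  move=> p; have [cw|wc] := leP (c p) (w p); first exact: Tsubfixed_at_max.
  have -> : W = fun q => Num.max (c q) (w q) by apply/funext => q; rewrite /W maxC.
  apply: Tsubfixed_at_max (ltW wc); apply: cone_Tsubfixed_at => //.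
  by case: (cone_ok p wc).
have := w_max W_sub W_le_u x.
by rewrite /W /c metric_xx // mulr0 subr0 ge_max => /andP[_]; lra.
Qed.

Lemma maximal_descent x (b : R) : (w x)%:E < u x -> (0 < b < l x - lam * w x)%R ->
  exists2 y, y <> x & (b * d x y <= w x - w y)%R.
Proof.
move=> wx_lt_u /andP[b_gt0 b_lt]; apply: contrapT => no_descent.
have flat y : y <> x -> (w x - w y < b * d x y)%R.
  by move=> yx; rewrite ltNge; apply/negP => ?; apply: no_descent; exists y.
pose eps := (l x - lam * w x - b)%R.
have eps_gt0 : (0 < eps)%R by rewrite subr_gt0.
have [d1 d1_gt0 l_near] : exists2 d1 : R, (0 < d1)%R &
    forall p, (d x p < d1)%R -> (l x - eps / 2 < l p)%R.
  have lx_gt : (l x - eps / 2)%:E < (l x)%:E by rewrite lte_fin; lra.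
  have [d1 d1_gt0 l_near] := l_lsc lx_gt.
  by exists d1 => // p /l_near; rewrite lte_fin.
have [eta eta_gt0 eta_lt_u] := lte_fin_gap wx_lt_u.
have [d2 d2_gt0 u_near] := u_lsc eta_lt_u.
pose del := Num.min d1 d2.
have del_gt0 : (0 < del)%R by rewrite lt_min d1_gt0.
have [del_d1 del_d2] : (del <= d1 /\ del <= d2)%R by rewrite !ge_min !lexx orbT.
pose a := Num.min eta (Num.min (eps * del / 4) (eps / 4))%R.
have a_gt0 : (0 < a)%R by rewrite !lt_min eta_gt0 !divr_gt0 ?mulr_gt0.
have [a_eta a_del a_eps] : [/\ a <= eta, a <= eps * del / 4 & a <= eps / 4]%R.
  by rewrite !ge_min !lexx !orbT.
have [h /andP[h_gt0 h_a] h_lam] := exists_pos_below a_gt0 lam_ge0.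
(* The cone w x + h - (b + eps / 4) d(x, .) rises above w only inside the
   balls where u > w x + eta and l > l x - eps / 2. *)
apply: (@maximal_no_cone x (w x + h) (b + eps / 4)); [lra|lra|move=> p wp_lt].
have dxp_lt : (d x p < del)%R.
  have [->|px] := pselect (p = x); first by rewrite metric_xx.
  rewrite -(ltr_pM2l (_ : 0 < eps / 4)%R); last by lra.
  by have := flat p px; lra.
have cone_le : (w x + h - (b + eps / 4) * d x p <= w x + h)%R.
  have : (0 <= b + eps / 4)%R by lra.
  by move/mulr_ge0/(_ (metric_ge0 d_metric x p)); lra.
split.
  have u_p : (w x + eta)%:E < u p.
    exact: u_near (lt_le_trans dxp_lt del_d2).
  by apply: le_trans (ltW u_p); rewrite lee_fin; lra.
have := l_near p (lt_le_trans dxp_lt del_d1).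
have epsE : eps = (l x - lam * w x - b)%R by [].
by have := ler_wpM2l lam_ge0 cone_le; lra.
Qed.

Lemma maximal_supersolution :
  (forall x, (l x)%:E <= lam%:E * u x + gslope d u x) ->
  (forall x, (0 <= w x)%R) -> einf_X (EFin \o w) = 0 ->
  supersolution d lam l (EFin \o w).
Proof.
move=> u_super w0 w_inf; split; [exact: Tsubfixed_lsc | by [] | move=> x /=].
have [l_le|l_gt] := leP (l x) (lam * w x)%R.
  by rewrite -EFinM (le_trans _ (leeDl _ (gslope_ge0 d _ x))) ?lee_fin.
have [ux_eq|ux_neq] := eqVneq (u x) (w x)%:E.
  apply: le_trans (u_super x) _; rewrite ux_eq leeD2l //.
  by apply: le_gslope => //; rewrite ux_eq.
have wx_lt_u : (w x)%:E < u x by rewrite lt_neqAle eq_sym ux_neq w_le_u.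
have steep : (l x - lam * w x)%:E <= gslope d (EFin \o w) x.
  by apply: gslope_ge => // b b_range; apply: maximal_descent.
by rewrite -EFinM; apply: le_trans (leeD2l _ steep); rewrite -EFinD lee_fin; lra.
Qed.

End MaximalTsubfixed.
End OperatorT.

Theorem theorem3p6 (R : realType) (X : Type) (d : X -> X -> R) (lam : R)
  (l : X -> R) (u : X -> \bar R) :
  is_metric d -> (0 <= lam)%R ->
  (forall x, (0 <= l x)%R) -> lsc_d d (fun x => (l x)%:E) ->
  einf_X (fun x => (l x)%:E) = 0 ->
  supersolution d lam l u ->
  solution d lam l (Tinf d lam l u).
Proof.
move=> d_metric lam_ge0 l_ge0 l_lsc _ [u_lsc u_inf u_super].
have u_ge0 x : 0 <= u x by rewrite -u_inf; apply: ereal_inf_lbound; exists x.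
have [_ [y _ <-] uy_lt1] : exists2 e, range u e & e < 1.
  by apply: ereal_inf_lt; rewrite -/(einf_X u) u_inf.
have v_fin x : Tinf d lam l u x \is a fin_num.
  by apply: Tinf_fin_num => //; exists y; apply: lt_trans uy_lt1 (ltry _).
pose v := fine \o Tinf d lam l u.
have -> : Tinf d lam l u = EFin \o v by apply/funext => x /=; rewrite fineK.
have v_sub : Tsubfixed d lam l v by exact: Tinf_Tsubfixed.
have v_le_u p : (v p)%:E <= u p by rewrite /= fineK // (Tinf_le_iter _ _ d_metric _ 0).
have v_ge0 p : (0 <= v p)%R by rewrite -lee_fin /= fineK // Tinf_ge0.
have v_inf : einf_X (EFin \o v) = 0.
  by apply: einf_X_squeeze v_le_u u_inf => p; rewrite lee_fin.
have v_max w : Tsubfixed d lam l w -> (forall p, (w p)%:E <= u p) ->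
    forall p, (w p <= v p)%R.
  by move=> w_sub w_le_u p; rewrite -lee_fin /= fineK // Tsubfixed_le_Tinf.
split; first exact: (Tsubfixed_lsc d_metric lam_ge0 l_ge0 v_ge0 v_sub).
split; first exact: Tsubfixed_subsolution.
exact: (maximal_supersolution d_metric lam_ge0 l_ge0 l_lsc u_lsc v_le_u v_sub v_max
  u_super v_ge0 v_inf).
Qed.
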